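(* Let $n,m\in\mathbb N$ and $\tau_{-n+1},\dots,\tau_{n-1}\in M_m(\mathbb C)$, and let $T\in M_n(M_m(\mathbb C))$ be the block Toeplitz matrix whose $(i,j)$ block is $\tau_{i-j}$ ($0\le i,j\le n-1$). The following are equivalent: (1) $T$ is positive semidefinite; (2) for every function $F:S^1\to M_m(\mathbb C)$ of the form $F(z)=\sum_{k=-n+1}^{n-1}a_kz^k$ with $a_k\in M_m(\mathbb C)$ such that $F(z)$ is positive semidefinite for every $z\in S^1$, the matrix $\sum_{k=-n+1}^{n-1}\tau_{-k}\circ a_k$ is positive semidefinite.
   Context: $S^1$ is the unit circle; $a\circ b$ denotes the Schur–Hadamard (entrywise) product of $m\times m$ matrices. *)

From HB Require Import structures.
From mathcomp Require Import all_boot all_order all_algebra.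
From mathcomp Require Import reals complex.
Set Implicit Arguments. Unset Strict Implicit. Unset Printing Implicit Defensive.
Import Order.TTheory GRing.Theory Num.Theory.
Local Open Scope ring_scope.

Definition adjmx (C : numClosedFieldType) (p q : nat) (A : 'M[C]_(p, q)) : 'M[C]_(q, p) :=
  (map_mx Num.conj A)^T.

Definition psd (C : numClosedFieldType) (p : nat) (A : 'M[C]_p) : Prop :=
  adjmx A = A /\ forall v : 'cV[C]_p, 0 <= (adjmx v *m A *m v) 0 0.

Definition hadamard (C : numClosedFieldType) (p q : nat) (A B : 'M[C]_(p, q)) : 'M[C]_(p, q) :=
  \matrix_(i, j) (A i j * B i j).

(* the index range -n+1, ..., n-1 (empty when n = 0) *)
Definition krange (n : nat) : seq int :=
  [seq (i%:Z - (n%:Z - 1)) | i <- iota 0 (2 * n).-1].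

Definition block_toeplitz (C : numClosedFieldType) (n m : nat) (tau : int -> 'M[C]_m)
  : 'M[C]_(\sum_(i < n) m) :=
  \mxblock_(i < n, j < n) tau (i%:Z - j%:Z).

Definition trig_mxpoly (C : numClosedFieldType) (n m : nat) (a : int -> 'M[C]_m) (z : C)
  : 'M[C]_m :=
  \sum_(k <- krange n) (z ^ k) *: a k.

(* (1) => (2): write T = S^* S.  The block rows R_i of S^* satisfy
   R_i R_j^* = tau_(i-j), so the families (R_0, ..., R_(n-2)) and
   (R_1, ..., R_(n-1)) have the same Gram matrix and hence differ by a unitary
   U: R_k = R_0 U^k.  Diagonalising U = Q^* diag(lam) Q with |lam_l| = 1 gives
   tau_k = sum_l lam_l^k v_l v_l^*, and then
   x^* (sum_k tau_(-k) o a_k) x = sum_l u_l^* F(lam_l^-1) u_l >= 0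
   with u_l = conj(v_l) o x.
   (2) => (1): for x = (x_0, ..., x_(n-1)) the autocorrelation
   a_k = sum_(j-i=k) conj(x_i) x_j^T makes F(z) = y y^* positive on the circle,
   and 1^* (sum_k tau_(-k) o a_k) 1 = x^* T x. *)

From HB Require Import structures.
From mathcomp Require Import all_boot all_order all_algebra.
From mathcomp Require Import ring zify.
From mathcomp Require Import reals complex.

Set Implicit Arguments. Unset Strict Implicit. Unset Printing Implicit Defensive.
Import Order.TTheory GRing.Theory Num.Theory.
Local Open Scope ring_scope.
Local Open Scope sesquilinear_scope.

Lemma submxblock_mul (R : pzSemiRingType) p q k (p_ : 'I_p -> nat) (q_ : 'I_q -> nat)
    (A : 'M[R]_(\sum_i p_ i, k)) (B : 'M[R]_(k, \sum_j q_ j)) i j :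
  submxblock (A *m B) i j = submxcol A i *m submxrow B j.
Proof. by rewrite submxblockEh -mul_submxrow submxcol_mul. Qed.

Section Adjoint.
Context {C : numClosedFieldType}.

Lemma expr_unit_conj (x : C) (i j : nat) :
  `|x| = 1 -> x ^+ i * (x ^+ j)^* = (x ^ (i%:Z - j%:Z))%R.
Proof.
move=> x1; have x0 : x != 0 by rewrite -normr_eq0 x1 oner_neq0.
have xC : x^* = x^-1 by rewrite invC_norm x1 expr1n invr1 mul1r.
by rewrite rmorphXn /= xC exprVn exprnN expfzDr.
Qed.


Lemma adjmxE p q (A : 'M[C]_(p, q)) : adjmx A = A^t*.
Proof. by rewrite /adjmx map_trmx. Qed.

Lemma trmxC_mul p q r (A : 'M[C]_(p, q)) (B : 'M[C]_(q, r)) :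
  (A *m B)^t* = B^t* *m A^t*.
Proof. by rewrite trmx_mul map_mxM. Qed.

Lemma trmxC_delta p (i : 'I_p) : (delta_mx i 0 : 'cV[C]_p)^t* = delta_mx 0 i.
Proof. by apply/matrixP => a b; rewrite !mxE conjC_nat andbC. Qed.

Lemma trmxC_diag p (d : 'rV[C]_p) : (diag_mx d)^t* = diag_mx (map_mx Num.conj d).
Proof. by rewrite tr_diag_mx map_diag_mx. Qed.

Lemma trmxC_mxcol p k (p_ : 'I_p -> nat) (X : forall i, 'M[C]_(p_ i, k)) :
  (\mxcol_i X i)^t* = \mxrow_i (X i)^t*.
Proof. by apply/matrixP => a b; rewrite !mxE. Qed.

Lemma submxcol_trmxC p k (p_ : 'I_p -> nat) (S : 'M[C]_(k, \sum_i p_ i)) i :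
  submxcol (S^t*) i = (submxrow S i)^t*.
Proof. by apply/matrixP => a b; rewrite !mxE. Qed.

Lemma mulmx_trmxC_eq0 p q (M : 'M[C]_(p, q)) : M *m M^t* = 0 -> M = 0.
Proof.
move=> MM0; apply/matrixP => i j; rewrite mxE.
have /eqP := congr1 (fun X : 'M[C]_p => X i i) MM0; rewrite !mxE.
rewrite psumr_eq0 => [/allP/(_ j (mem_index_enum j))/implyP/(_ isT)|k _].
  by rewrite !mxE mul_conjC_eq0 => /eqP.
by rewrite !mxE mul_conjC_ge0.
Qed.

Lemma mulmx_gram_eq s r N (X : 'M[C]_(s, r)) (A B : 'M[C]_(r, N)) :
  A *m A^t* = B *m B^t* -> X *m A *m (X *m A)^t* = X *m B *m (X *m B)^t*.
Proof. by move=> AB; rewrite !trmxC_mul !mulmxA -!(mulmxA X) AB. Qed.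

Lemma bilin_formE p (w v : 'cV[C]_p) (M : 'M[C]_p) :
  (w^t* *m M *m v) 0 0 = \sum_q \sum_p0 (w p0 0)^* * M p0 q * v q 0.
Proof.
rewrite mxE; apply: eq_bigr => q _; rewrite mxE big_distrl.
by apply: eq_bigr => p0 _; rewrite !mxE.
Qed.

End Adjoint.

Section Unitary.
Context {C : numClosedFieldType}.

Lemma trmxC_orth p q N (A : 'M[C]_(p, N)) (B : 'M[C]_(q, N)) :
  A *m B^t* = 0 -> B *m A^t* = 0.
Proof. by move=> AB; rewrite -[LHS]trmxCK trmxC_mul trmxCK AB trmx0 map_mx0. Qed.

Lemma unitarymx_compl r N (E : 'M[C]_(r, N)) : E \is unitarymx ->
  exists E' : 'M[C]_(N - r, N),
    [/\ E' \is unitarymx, E *m E'^t* = 0 & E^t* *m E + E'^t* *m E' = 1%:M].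
Proof.
move=> Eu; have rN : (r <= N)%N by rewrite -(mxrank_unitary Eu) rank_leq_col.
pose O := orthomx Num.Def.conjC (hermitian1mx N) E.
have rkO : \rank O = (N - r)%N by rewrite rank_ortho (mxrank_unitary Eu).
pose E' := schmidt (row_base O); rewrite -rkO; exists E'.
have E'u : E' \is unitarymx by rewrite schmidt_unitarymx ?rank_leq_col.
have EE' : E *m E'^t* = 0.
  apply/orthomx1P.
  by rewrite orthomx_sym eqmx_schmidt_free ?row_base_free // eq_row_base.
split=> //.
have Mu : col_mx E E' \is unitarymx.
  apply/unitarymxP; rewrite tr_col_mx map_row_mx mul_col_row.
  by rewrite !(unitarymxP _) // EE' trmxC_orth // -scalar_mx_block.
have rO : (r + \rank O)%N = N by rewrite rkO subnKC.
by have := mulmxKtV 1%:M Mu rO; rewrite mul1mx tr_col_mx map_row_mx mul_row_col.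
Qed.

Lemma unitarymx_transitive r N (E F : 'M[C]_(r, N)) :
  E \is unitarymx -> F \is unitarymx ->
  exists2 U : 'M[C]_N, U \is unitarymx & E *m U = F.
Proof.
move=> Eu Fu; have [E' [E'u EE' E1]] := unitarymx_compl Eu.
have [F' [F'u FF' _]] := unitarymx_compl Fu.
(* complete E and F to unitary bases and send one onto the other *)
exists (E^t* *m F + E'^t* *m F').
  apply/unitarymxP; rewrite linearD /= map_mxD !trmxC_mul !trmxCK.
  rewrite mulmxDl !mulmxDr !mulmxA -!(mulmxA _ F) -!(mulmxA _ F').
  rewrite !(unitarymxP _) // FF' trmxC_orth //.
  by rewrite !mulmx0 !mul0mx addr0 add0r !mulmx1.
by rewrite mulmxDr !mulmxA (unitarymxP Eu) EE' mul1mx mul0mx addr0.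
Qed.

Lemma gram_eq_unitary_factor r N (A B : 'M[C]_(r, N)) :
  A *m A^t* = B *m B^t* ->
  exists k (L : 'M[C]_(r, k)) (E F : 'M[C]_(k, N)),
    [/\ E \is unitarymx, F \is unitarymx, A = L *m E & B = L *m F].
Proof.
(* K maps A onto an orthonormal basis E of its row space; as the Gram
   matrices agree, K B is orthonormal as well, and L F recovers B. *)
move=> AB; pose E := schmidt (row_base A).
have Eu : E \is unitarymx by rewrite schmidt_unitarymx ?rank_leq_col.
have EA : (E :=: A)%MS.
  exact: eqmx_trans (eqmx_schmidt_free (row_base_free A)) (eq_row_base A).
pose K := E *m pinvmx A; pose L := A *m pinvmx E.
have KA : K *m A = E by rewrite mulmxKpV // EA.
have LE : L *m E = A by rewrite mulmxKpV // EA.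
exists _, L, E, (K *m B); split=> //.
  by apply/unitarymxP; rewrite -(mulmx_gram_eq K AB) KA; apply/unitarymxP.
have LK_A : (1%:M - L *m K) *m A = 0.
  by rewrite mulmxBl mul1mx -mulmxA KA LE subrr.
have /mulmx_trmxC_eq0 : (1%:M - L *m K) *m B *m ((1%:M - L *m K) *m B)^t* = 0.
  by rewrite -(mulmx_gram_eq _ AB) LK_A mul0mx.
by rewrite mulmxBl mul1mx mulmxA => /eqP; rewrite subr_eq0 => /eqP.
Qed.

Lemma unitarymx_of_gram_eq r N (A B : 'M[C]_(r, N)) :
  A *m A^t* = B *m B^t* -> exists2 U : 'M[C]_N, U \is unitarymx & A *m U = B.
Proof.
move=> /gram_eq_unitary_factor [k [L [E [F [Eu Fu -> ->]]]]].
by have [U Uu EU] := unitarymx_transitive Eu Fu; exists U; rewrite // -mulmxA EU.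
Qed.

Lemma unitarymx_spectral n (U : 'M[C]_n) : U \is unitarymx ->
  exists Q (lam : 'rV[C]_n),
    [/\ Q \is unitarymx, forall l, `|lam 0 l| = 1 & U = Q^t* *m diag_mx lam *m Q].
Proof.
move=> Uu; have Un : U \is normalmx.
  by apply/normalmxP; rewrite (unitarymxP Uu) mulmx1C //; apply/unitarymxP.
have Qu := spectral_unitarymx U.
have /orthomx_spectralP := Un; rewrite invmx_unitary //.
set Q := spectralmx U; set lam := spectral_diag U => UE.
exists Q, lam; split=> // l.
have : Q *m (U *m U^t*) *m Q^t* = 1%:M.
  by rewrite (unitarymxP Uu) mulmx1 (unitarymxP Qu).
rewrite UE !trmxC_mul trmxCK !mulmxA !(mulmxtVK _ Qu) (unitarymxP Qu) mul1mx.
rewrite trmxC_diag mulmx_diag => /matrixP/(_ l l); rewrite !mxE eqxx !mulr1n.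
by rewrite -normCK => /eqP; rewrite sqrp_eq1 // => /eqP.
Qed.

End Unitary.

Section Psd.
Context {C : numClosedFieldType}.

Lemma hermitian_of_qform_conj p (A : 'M[C]_p) :
  (forall v : 'cV[C]_p, ((v^t* *m A *m v) 0 0)^* = (v^t* *m A *m v) 0 0) ->
  A^t* = A.
Proof.
move=> qformC; pose f (v w : 'cV[C]_p) := (v^t* *m A *m w) 0 0.
have fDl u v w : f (u + v) w = f u w + f v w.
  by rewrite /f linearD /= map_mxD !mulmxDl mxE.
have fDr u v w : f u (v + w) = f u v + f u w by rewrite /f mulmxDr mxE.
have fZr c u w : f u (c *: w) = c * f u w by rewrite /f -scalemxAr mxE.
have fZl c u w : f (c *: u) w = c^* * f u w.
  by rewrite /f linearZ /= map_mxZ -!scalemxAl mxE.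
have fvvC v : (f v v)^* = f v v := qformC v.
(* polarization at [v + w] and at [v + 'i w] *)
have fsym v w : (f v w + f w v)^* = f v w + f w v.
  have e := fvvC (v + w); rewrite fDl !fDr in e.
  have -> : f v w + f w v = f v v + f v w + (f w v + f w w) - f v v - f w w by ring.
  by rewrite !rmorphB /= e !fvvC.
have fC v w : (f v w)^* = f w v.
  have e1 := fsym v w; have e2 := fsym v ('i *: w).
  rewrite rmorphD /= in e1.
  rewrite fZl fZr conjCi rmorphD /= !rmorphM /= conjCi raddfN /= conjCi opprK in e2.
  apply: (mulfI (_ : 2%:R * 'i != 0)); first by rewrite mulf_neq0 ?pnatr_eq0 ?neq0Ci.
  have -> : 2%:R * 'i * (f v w)^* =
    'i * ((f v w)^* + (f w v)^*) - (- 'i * (f v w)^* + 'i * (f w v)^*) by ring.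
  by rewrite e1 e2; ring.
apply/matrixP => i j; have fij a b : f (delta_mx a 0) (delta_mx b 0) = A a b.
  by rewrite /f trmxC_delta -rowE -colE !mxE.
by rewrite !mxE -!fij fC.
Qed.

Lemma psdP p (A : 'M[C]_p) :
  psd A <-> forall v : 'cV[C]_p, 0 <= (v^t* *m A *m v) 0 0.
Proof.
split=> [[_ A_ge0] v|A_ge0]; first by rewrite -adjmxE.
split=> [|v]; last by rewrite adjmxE.
by rewrite adjmxE; apply: hermitian_of_qform_conj => v; rewrite geC0_conj.
Qed.

Lemma psd_mulmx_trmxC p q (A : 'M[C]_(p, q)) : psd (A *m A^t*).
Proof.
apply/psdP => v; have -> : v^t* *m (A *m A^t*) *m v = (A^t* *m v)^t* *m (A^t* *m v).
  by rewrite trmxC_mul trmxCK !mulmxA.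
by rewrite mxE sumr_ge0 // => i _; rewrite !mxE mulrC mul_conjC_ge0.
Qed.

Lemma psd_gram p (T : 'M[C]_p) : psd T -> exists S : 'M[C]_p, T = S^t* *m S.
Proof.
move=> Tpsd; have [+ _] := Tpsd; rewrite adjmxE => Th.
have /orthomx_spectralP : T \is normalmx.
  by apply/hermitian_normalmx/is_hermitianmxP; rewrite expr0 scale1r Th.
have Pu := spectral_unitarymx T; rewrite invmx_unitary //.
set P := spectralmx T; set s := spectral_diag T => TE.
have s_ge0 l : 0 <= s 0 l.
  have /psdP/(_ (P^t* *m delta_mx l 0)) := Tpsd.
  rewrite trmxC_mul trmxCK trmxC_delta TE !mulmxA !(mulmxtVK _ Pu).
  by rewrite -rowE -colE !mxE eqxx mulr1n.
exists (diag_mx (map_mx sqrtC s) *m P).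
rewrite trmxC_mul trmxC_diag -mulmxA (mulmxA (diag_mx _)) mulmx_diag {1}TE.
rewrite -mulmxA; congr (_ *m (diag_mx _ *m _)); apply/rowP => l.
by rewrite !mxE geC0_conj ?sqrtC_ge0 // -expr2 sqrtCK.
Qed.

End Psd.

Section BlockToeplitz.
Context {C : numClosedFieldType}.
Variables (m : nat) (tau : int -> 'M[C]_m).

Lemma psd_block_toeplitz_gram n : psd (block_toeplitz n tau) ->
  exists N (R : 'I_n -> 'M[C]_(m, N)),
    forall i j, R i *m (R j)^t* = tau (i%:Z - j%:Z).
Proof.
move=> /psd_gram [S TE]; exists _, (fun i => (submxrow S i)^t*) => i j.
by rewrite trmxCK -submxcol_trmxC -submxblock_mul -TE mxblockK.
Qed.

Lemma toeplitz_gram_shift n N (R : 'I_n.+1 -> 'M[C]_(m, N)) :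
  (forall i j, R i *m (R j)^t* = tau (i%:Z - j%:Z)) ->
  exists2 U : 'M[C]_N, U \is unitarymx &
    forall i : 'I_n, R (widen_ord (leqnSn n) i) *m U = R (lift ord0 i).
Proof.
move=> RR; pose Y := \mxcol_(i < n) R (widen_ord (leqnSn n) i).
pose Z := \mxcol_(i < n) R (lift ord0 i).
have /unitarymx_of_gram_eq [U Uu YUZ] : Y *m Y^t* = Z *m Z^t*.
  rewrite !trmxC_mxcol !mul_mxcol_mxrow; apply: eq_mxblock => i j.
  by rewrite !RR /= /bump !add1n !intS; congr tau; ring.
exists U => // i; have := congr1 (fun M => submxcol M i) YUZ.
by rewrite mxcol_mul !mxcolK.
Qed.

Lemma shift_spectral_rows n N (R : 'I_n.+1 -> 'M[C]_(m, N)) (Q : 'M[C]_N)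
    (lam : 'rV[C]_N) :
  Q \is unitarymx ->
  (forall i : 'I_n,
    R (widen_ord (leqnSn n) i) *m (Q^t* *m diag_mx lam *m Q) = R (lift ord0 i)) ->
  forall i : 'I_n.+1, R i = R ord0 *m Q^t* *m diag_mx (\row_l lam 0 l ^+ i) *m Q.
Proof.
move=> Qu RU [k]; elim: k => [|k IHk] ltkn.
  rewrite (_ : Ordinal ltkn = ord0); last exact: val_inj.
  rewrite (_ : diag_mx _ = 1%:M) ?mulmx1 ?mulmxKtV //.
  by apply/matrixP => a b; rewrite !mxE expr0.
have ltkn' : (k < n)%N by [].
rewrite (_ : Ordinal ltkn = lift ord0 (Ordinal ltkn')); last exact: val_inj.
rewrite -RU (_ : widen_ord _ _ = Ordinal (ltnW ltkn)); last exact: val_inj.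
rewrite IHk !mulmxA (mulmxtVK _ Qu) -(mulmxA _ (diag_mx _)) mulmx_diag.
by congr (_ *m diag_mx _ *m _); apply/rowP => l; rewrite !mxE exprSr.
Qed.

Lemma psd_block_toeplitz_decomposition n : psd (block_toeplitz n tau) ->
  exists N (V : 'M[C]_(m, N)) (lam : 'rV[C]_N), (forall l, `|lam 0 l| = 1) /\
    forall i j : 'I_n,
      tau (i%:Z - j%:Z) = V *m diag_mx (\row_l (lam 0 l ^ (i%:Z - j%:Z))%R) *m V^t*.
Proof.
move=> /psd_block_toeplitz_gram [N [R RR]].
case: n R RR => [|n] R RR; first by exists 0%N, 0, 0; split=> [[]|[]].
have [U Uu RU] := toeplitz_gram_shift RR.
have [Q [lam [Qu lam1 UE]]] := unitarymx_spectral Uu.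
rewrite UE in RU; have RE := shift_spectral_rows Qu RU.
exists N, (R ord0 *m Q^t*), lam; split=> // i j.
rewrite -RR (RE i) (RE j) !trmxC_mul trmxCK trmxC_diag !mulmxA (mulmxtVK _ Qu).
rewrite -(mulmxA _ (diag_mx _)) mulmx_diag.
by congr (_ *m diag_mx _ *m _ *m _); apply/rowP => l; rewrite !mxE expr_unit_conj.
Qed.

End BlockToeplitz.

Lemma krange_uniq n : uniq (krange n).
Proof. by rewrite map_inj_uniq ?iota_uniq // => a b /= /addIr []. Qed.

Lemma mem_krange n (i j : 'I_n) : j%:Z - i%:Z \in krange n.
Proof.
apply/mapP; exists (j + n.-1 - i)%N.
  by rewrite mem_iota add0n; have := ltn_ord i; have := ltn_ord j; lia.
by have := ltn_ord i; have := ltn_ord j; lia.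
Qed.

Lemma krangeP n k : k \in krange n -> exists i j : 'I_n, k = j%:Z - i%:Z.
Proof.
case/mapP => t; rewrite mem_iota add0n => /andP [_ ltt] ->.
have n_gt0 : (0 < n)%N by lia.
case: (leqP n.-1 t) => tn.
  have ltj : (t - n.-1 < n)%N by lia.
  by exists (Ordinal n_gt0), (Ordinal ltj) => /=; lia.
have lti : (n.-1 - t < n)%N by lia.
by exists (Ordinal lti), (Ordinal n_gt0) => /=; lia.
Qed.

Lemma big_krange_diff n (V : nmodType) (G : int -> 'I_n -> 'I_n -> V) :
  \sum_(k <- krange n) \sum_(i < n) \sum_(j < n | k == j%:Z - i%:Z) G k i j =
  \sum_(i < n) \sum_(j < n) G (j%:Z - i%:Z) i j.
Proof.
rewrite exchange_big; apply: eq_bigr => i _.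
rewrite (exchange_big_dep xpredT) //=; apply: eq_bigr => j _.
rewrite -big_filter (@eq_filter _ _ (pred1 (j%:Z - i%:Z))) //.
by rewrite filter_pred1_uniq ?krange_uniq ?mem_krange // big_seq1.
Qed.

Section Pairing.
Context {C : numClosedFieldType}.
Variables (n m : nat).

Lemma qform_sum_hadamard_moment L (V : 'M[C]_(m, L)) (mu : 'rV[C]_L)
    (a : int -> 'M[C]_m) (v : 'cV[C]_m) :
  (v^t* *m (\sum_(k <- krange n)
      hadamard (V *m diag_mx (\row_l (mu 0 l ^ k)%R) *m V^t*) (a k)) *m v) 0 0 =
  \sum_l (let u := hadamard (map_mx Num.conj (col l V)) v in
          (u^t* *m trig_mxpoly n a (mu 0 l) *m u) 0 0).
Proof.
rewrite bilin_formE.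
transitivity (\sum_q \sum_p \sum_(k <- krange n) \sum_l
    (v p 0)^* * (V p l * (mu 0 l ^ k)%R * (V q l)^*) * a k p q * v q 0).
  apply: eq_bigr => q _; apply: eq_bigr => p _.
  rewrite summxE big_distrr big_distrl /=; apply: eq_bigr => k _.
  rewrite mxE mul_mx_diag mxE big_distrl big_distrr big_distrl /=.
  by apply: eq_bigr => l _; rewrite !mxE; ring.
under eq_bigr do under eq_bigr do rewrite exchange_big.
under eq_bigr do rewrite exchange_big.
rewrite exchange_big; apply: eq_bigr => l _ /=; rewrite bilin_formE.
apply: eq_bigr => q _; apply: eq_bigr => p _.
rewrite /trig_mxpoly summxE big_distrr big_distrl /=; apply: eq_bigr => k _.
by rewrite !mxE rmorphM /= conjCK; ring.
Qed.

Lemma psd_sum_hadamard_moment (tau : int -> 'M[C]_m) L (V : 'M[C]_(m, L))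
    (mu : 'rV[C]_L) (a : int -> 'M[C]_m) :
  (forall l, `|mu 0 l| = 1) ->
  (forall k, k \in krange n ->
     tau (- k) = V *m diag_mx (\row_l (mu 0 l ^ k)%R) *m V^t*) ->
  (forall z : C, `|z| = 1 -> psd (trig_mxpoly n a z)) ->
  psd (\sum_(k <- krange n) hadamard (tau (- k)) (a k)).
Proof.
move=> mu1 tauE Fpsd; apply/psdP => v.
under eq_big_seq => k kn do rewrite tauE //.
rewrite qform_sum_hadamard_moment sumr_ge0 // => l _.
by have /psdP := Fpsd _ (mu1 l); apply.
Qed.

Definition autocorr (x : 'I_n -> 'cV[C]_m) (k : int) : 'M[C]_m :=
  \matrix_(p, q) \sum_(i < n) \sum_(j < n | k == j%:Z - i%:Z) (x i p 0)^* * x j q 0.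

Lemma trig_mxpoly_autocorr (x : 'I_n -> 'cV[C]_m) (z : C) : `|z| = 1 ->
  let y := \col_p \sum_(i < n) (z ^+ i * x i p 0)^* in
  trig_mxpoly n (autocorr x) z = y *m y^t*.
Proof.
move=> z1 y; apply/matrixP => p q; rewrite summxE.
transitivity (\sum_(k <- krange n) \sum_(i < n) \sum_(j < n | k == j%:Z - i%:Z)
    (z ^ k)%R * ((x i p 0)^* * x j q 0)).
  apply: eq_bigr => k _; rewrite !mxE big_distrr; apply: eq_bigr => i _.
  by rewrite big_distrr.
rewrite big_krange_diff !mxE big_ord1 !mxE rmorph_sum big_distrl /=.
apply: eq_bigr => i _; rewrite big_distrr; apply: eq_bigr => j _ /=.
by rewrite -expr_unit_conj // !rmorphM /= !conjCK; ring.
Qed.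

Lemma qform1_sum_hadamard_autocorr (tau : int -> 'M[C]_m) (x : 'I_n -> 'cV[C]_m) :
  ((const_mx 1 : 'cV[C]_m)^t* *m
     (\sum_(k <- krange n) hadamard (tau (- k)) (autocorr x k)) *m
     (const_mx 1 : 'cV[C]_m)) 0 0 =
  ((\mxcol_i x i)^t* *m block_toeplitz n tau *m \mxcol_i x i) 0 0.
Proof.
rewrite bilin_formE trmxC_mxcol mul_mxrow_mxblock mul_mxrow_mxcol summxE.
transitivity (\sum_q \sum_p \sum_(i < n) \sum_(j < n)
    (x i p 0)^* * tau (i%:Z - j%:Z) p q * x j q 0).
  apply: eq_bigr => q _; apply: eq_bigr => p _.
  rewrite !mxE conjC1 mul1r mulr1 summxE.
  transitivity (\sum_(k <- krange n) \sum_(i < n) \sum_(j < n | k == j%:Z - i%:Z)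
      (x i p 0)^* * tau (- k) p q * x j q 0).
    apply: eq_bigr => k _; rewrite !mxE big_distrr; apply: eq_bigr => i _.
    by rewrite big_distrr /=; apply: eq_bigr => j _; ring.
  by rewrite big_krange_diff; apply: eq_bigr => i _; apply: eq_bigr => j _; rewrite opprB.
under eq_bigr do rewrite exchange_big.
under eq_bigr do under eq_bigr do rewrite exchange_big.
rewrite exchange_big; under eq_bigr do rewrite exchange_big.
rewrite exchange_big; apply: eq_bigr => j _; rewrite mulmx_suml summxE.
by apply: eq_bigr => i _; rewrite bilin_formE.
Qed.

Lemma psd_block_toeplitz_of_pairing (tau : int -> 'M[C]_m) :
  (forall a : int -> 'M[C]_m,
     (forall z : C, `|z| = 1 -> psd (trig_mxpoly n a z)) ->
     psd (\sum_(k <- krange n) hadamard (tau (- k)) (a k))) ->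
  psd (block_toeplitz n tau).
Proof.
move=> pairing_psd; apply/psdP => x.
have := qform1_sum_hadamard_autocorr tau (submxcol (p_ := fun=> m) x).
rewrite submxcolK => <-; apply/(psdP _).1/pairing_psd => z z1.
by rewrite trig_mxpoly_autocorr //; apply: psd_mulmx_trmxC.
Qed.

End Pairing.

Theorem proposition6p1 (R : realType) (n m : nat) (tau : int -> 'M[R[i]]_m) :
  psd (block_toeplitz n tau) <->
  (forall a : int -> 'M[R[i]]_m,
     (forall z : R[i], `|z| = 1 -> psd (trig_mxpoly n a z)) ->
     psd (\sum_(k <- krange n) hadamard (tau (- k)) (a k))).
Proof.
split=> [Tpsd a Fpsd|]; last exact: psd_block_toeplitz_of_pairing.
have [N [V [lam [lam1 tauE]]]] := psd_block_toeplitz_decomposition Tpsd.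
apply: (psd_sum_hadamard_moment (mu := \row_l (lam 0 l)^-1)) Fpsd.
  by move=> l; rewrite mxE normfV lam1 invr1.
move=> k /krangeP [i [j ->]]; rewrite opprB tauE.
by congr (_ *m diag_mx _ *m _); apply/rowP => l; rewrite !mxE exprz_inv opprB.
Qed.
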